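(* Let $a,b,d>0$ and $c>c_-$, and let $\phi(x)=\frac{ax^3+bx^2+cx+d}{x^3}$, $x>0$. \begin{description} \item[(a)] If $\phi$ has a unique positive equilibrium $\overline{t}$, then $(\phi(t)-t)(t-\overline{t})<0$ for all $t>0$, $t\neq\overline{t}$. \item[(b)] If $\phi$ has two equilibria $\overline{t}_1<\overline{t}_2$, then for $c=c_M$ $$(\phi(t)-t)(t-\overline{t}_2)<0,\quad t>0,\ t\neq\overline{t}_1,\overline{t}_2,$$ and for $c=c_m$ $$(\phi(t)-t)(t-\overline{t}_1)<0,\quad t>0,\ t\neq\overline{t}_1,\overline{t}_2.$$ \item[(c)] If $\phi$ has three equilibria $\overline{t}_1<\overline{t}_2<\overline{t}_3$, then $$(\phi(t)-t)(t-\overline{t}_1)(t-\overline{t}_2)(t-\overline{t}_3)<0,\quad t>0,\ t\neq\overline{t}_1,\overline{t}_2,\overline{t}_3.$$ \end{description}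
   Context: $c_-$ is the unique negative zero of $Q(x)=4ax^3-b^2x^2-18abd\,x+27a^2d^2+4db^3$; the standing assumption $c>c_-$ guarantees that iterates of $\phi$ from positive points remain positive. Equilibria are points $t>0$ with $\phi(t)=t$, equivalently positive roots of $P(t)=t^4-at^3-bt^2-ct-d$. Let $c^*=-\sqrt{3bd}$ and let $c_b$ be the unique negative root of $H(x)=108x^2+(108ab+27a^3)x-9a^2b^2-32b^3$. When $c_b<\frac{b^2-12d}{3a}$, as the parameter $c$ increases from $c_b$ (with $a,b,d$ fixed), $P$ first acquires a positive double root $t_m$ located at a local minimum of $P$, and later a positive double root $t_M$ located at a local maximum of $P$; $c_m$ and $c_M$ denote the corresponding values of $c$ (one has $c_b<c_m<c_M<c^*$). Two equilibria occur only for $c=c_m$ or $c=c_M$ with $c\in(c_-,c^* )$. *)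

From Stdlib Require Import Reals.
Open Scope R_scope.

Definition phi (a b c d x : R) : R := (a*x^3 + b*x^2 + c*x + d) / x^3.

Definition is_equilibrium (a b c d t : R) : Prop := 0 < t /\ phi a b c d t = t.

Definition Ppoly (a b c d t : R) : R := t^4 - a*t^3 - b*t^2 - c*t - d.
Definition dPpoly (a b c t : R) : R := 4*t^3 - 3*a*t^2 - 2*b*t - c.

Definition Qpoly (a b d x : R) : R :=
  4*a*x^3 - b^2*x^2 - 18*a*b*d*x + 27*a^2*d^2 + 4*d*b^3.

Definition Hpoly (a b x : R) : R :=
  108*x^2 + (108*a*b + 27*a^3)*x - 9*a^2*b^2 - 32*b^3.

Definition is_c_minus (a b d x : R) : Prop :=
  x < 0 /\ Qpoly a b d x = 0 /\ forall y, y < 0 -> Qpoly a b d y = 0 -> y = x.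

Definition is_c_b (a b x : R) : Prop :=
  x < 0 /\ Hpoly a b x = 0 /\ forall y, y < 0 -> Hpoly a b y = 0 -> y = x.

Definition local_min (f : R -> R) (t : R) : Prop :=
  exists eps, 0 < eps /\ forall s, Rabs (s - t) < eps -> f t <= f s.
Definition local_max (f : R -> R) (t : R) : Prop :=
  exists eps, 0 < eps /\ forall s, Rabs (s - t) < eps -> f s <= f t.

Definition has_double_root_min (a b c d : R) : Prop :=
  exists t, 0 < t /\ Ppoly a b c d t = 0 /\ dPpoly a b c t = 0 /\
            local_min (Ppoly a b c d) t.
Definition has_double_root_max (a b c d : R) : Prop :=
  exists t, 0 < t /\ Ppoly a b c d t = 0 /\ dPpoly a b c t = 0 /\
            local_max (Ppoly a b c d) t.

Definition is_c_m (a b d c : R) : Prop :=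
  exists cb, is_c_b a b cb /\ cb < (b^2 - 12*d) / (3*a) /\ cb < c /\
    has_double_root_min a b c d /\
    forall c', cb < c' < c -> ~ has_double_root_min a b c' d.

Definition is_c_M (a b d c : R) : Prop :=
  exists cb, is_c_b a b cb /\ cb < (b^2 - 12*d) / (3*a) /\ cb < c /\
    has_double_root_max a b c d /\
    forall c', cb < c' < c -> ~ has_double_root_max a b c' d.

(* For t > 0, phi t - t = - P t / t^3, so the sign of phi t - t is opposite to
   that of the quartic P, with P 0 = - d < 0 and P eventually positive.  With a
   single positive root the sign of P is fixed by the intermediate value theorem.
   With two positive roots x1, x2 the product of the four roots is - d < 0, so
   P = (t - x1) (t - x2) (t - r) (t - s) with r < 0 < s and s is itself a
   positive root: for two equilibria s is a double root, and which one is
   decided by whether P has a local minimum or a local maximum there; for three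
   equilibria s is the third one. *)
From Stdlib Require Import Reals Lra Psatz.
Open Scope R_scope.

Lemma phi_sub_id a b c d t : 0 < t -> phi a b c d t - t = - Ppoly a b c d t / t^3.
Proof. intros Ht. unfold phi, Ppoly. field. lra. Qed.

Lemma is_equilibrium_iff_root a b c d t :
  0 < t -> is_equilibrium a b c d t <-> Ppoly a b c d t = 0.
Proof.
  intros Ht. assert (Ht3 : 0 < t^3) by (apply pow_lt; lra).
  pose proof (phi_sub_id a b c d t Ht) as E.
  unfold is_equilibrium. split.
  - intros [_ Hfix]. rewrite Hfix, Rminus_diag in E.
    assert (Hq : Ppoly a b c d t / t^3 = 0) by lra.
    unfold Rdiv in Hq. apply Rmult_integral in Hq as [Hq | Hq]; [exact Hq |].
    exfalso. apply (Rinv_neq_0_compat (t^3)); lra.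
  - intros Hroot. split; [exact Ht |].
    rewrite Hroot in E. unfold Rdiv in E. lra.
Qed.

Lemma is_equilibrium_root a b c d t :
  is_equilibrium a b c d t -> 0 < t /\ Ppoly a b c d t = 0.
Proof.
  intros He. pose proof (proj1 He) as Ht.
  split; [exact Ht | apply is_equilibrium_iff_root; assumption].
Qed.

Lemma phi_sub_mul_lt0 a b c d t X :
  0 < t -> 0 < Ppoly a b c d t * X -> (phi a b c d t - t) * X < 0.
Proof.
  intros Ht HPX. rewrite phi_sub_id by exact Ht.
  assert (Ht3 : 0 < t^3) by (apply pow_lt; lra).
  replace (- Ppoly a b c d t / t^3 * X) with (- (Ppoly a b c d t * X / t^3))
    by (field; lra).
  assert (0 < Ppoly a b c d t * X / t^3) by (apply Rdiv_lt_0_compat; assumption).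
  lra.
Qed.

Lemma Ppoly_eventually_pos a b c d t : exists M, t < M /\ 0 < Ppoly a b c d M.
Proof.
  set (K := Rabs a + Rabs b + Rabs c + Rabs d).
  assert (HK : 0 <= K) by (unfold K; pose proof (Rabs_pos a); pose proof (Rabs_pos b);
    pose proof (Rabs_pos c); pose proof (Rabs_pos d); lra).
  set (M := 1 + Rabs t + K).
  assert (HtM : t < M) by (unfold M; pose proof (Rle_abs t); lra).
  assert (HM1 : 1 <= M) by (unfold M; pose proof (Rabs_pos t); lra).
  exists M. split; [exact HtM |].
  assert (M2 : M <= M^2) by nra.
  assert (M3 : M^2 <= M^3) by (simpl; nra).
  assert (Ba : a * M^3 <= Rabs a * M^3) by (pose proof (Rle_abs a); nra).
  assert (Bb : b * M^2 <= Rabs b * M^3)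
    by (pose proof (Rle_abs b); pose proof (Rabs_pos b); nra).
  assert (Bc : c * M <= Rabs c * M^3)
    by (pose proof (Rle_abs c); pose proof (Rabs_pos c); nra).
  assert (Bd : d <= Rabs d * M^3)
    by (pose proof (Rle_abs d); pose proof (Rabs_pos d); nra).
  assert (BK : K * M^3 < M * M^3).
  { apply Rmult_lt_compat_r; [lra | unfold M; pose proof (Rabs_pos t); lra]. }
  unfold Ppoly, K in *. replace (M^4) with (M * M^3) by ring. lra.
Qed.

Lemma sign_unique_pos_root (f : R -> R) tb :
  continuity f -> f 0 < 0 -> (forall t, exists M, t < M /\ 0 < f M) ->
  (forall z, 0 < z -> f z = 0 -> z = tb) ->
  forall t, 0 < t -> t <> tb -> 0 < f t * (t - tb).
Proof.
  intros Hf Hf0 Hlarge Huniq t Ht Hne.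
  assert (Hft : f t <> 0) by (intros E; exact (Hne (Huniq t Ht E))).
  destruct (Rlt_or_le t tb) as [Hlt | Hge];
    destruct (Rlt_or_le (f t) 0) as [Hneg | Hnneg]; try nra; exfalso.
  - destruct (IVT f 0 t Hf Ht Hf0 ltac:(lra)) as [z [[Hz0 Hzt] Hz]].
    assert (Hz0' : 0 < z) by (destruct Hz0 as [? | <-]; lra).
    specialize (Huniq z Hz0' Hz). lra.
  - destruct (Hlarge t) as [M [HtM HM]].
    destruct (IVT f t M Hf HtM Hneg HM) as [z [[Htz _] Hz]].
    specialize (Huniq z ltac:(lra) Hz). lra.
Qed.

Lemma Ppoly_factor_two_roots a b c d x1 x2 :
  Ppoly a b c d x1 = 0 -> Ppoly a b c d x2 = 0 -> x1 <> x2 ->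
  exists p q, forall t, Ppoly a b c d t = (t - x1) * (t - x2) * (t^2 + p*t + q).
Proof.
  intros H1 H2 Hne.
  set (C := fun t => t^3 + (x1 - a)*t^2 + (x1^2 - a*x1 - b)*t
                     + (x1^3 - a*x1^2 - b*x1 - c)).
  assert (Div1 : forall t, Ppoly a b c d t = (t - x1) * C t + Ppoly a b c d x1)
    by (intros; unfold C, Ppoly; ring).
  assert (C2 : C x2 = 0).
  { rewrite Div1, H1, Rplus_0_r in H2.
    apply Rmult_integral in H2 as [H2 | H2]; [lra | exact H2]. }
  set (p := x2 + x1 - a). set (q := x2^2 + (x1 - a)*x2 + x1^2 - a*x1 - b).
  assert (Div2 : forall t, C t = (t - x2) * (t^2 + p*t + q) + C x2)
    by (intros; unfold C, p, q; ring).
  exists p, q. intros t. rewrite Div1, H1, Div2, C2. ring.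
Qed.

Lemma quadratic_factor_neg_const p q :
  q < 0 -> exists r s, r < 0 < s /\ forall t, t^2 + p*t + q = (t - r) * (t - s).
Proof.
  intros Hq. set (w := sqrt (p^2 - 4*q)).
  assert (Hw0 : 0 <= w) by apply sqrt_pos.
  assert (Hw2 : w * w = p^2 - 4*q) by (apply sqrt_sqrt; nra).
  assert (Hwp : p < w) by nra.
  assert (Hwp' : - p < w) by nra.
  exists ((- p - w) / 2), ((- p + w) / 2). split; [lra |].
  intros t. replace q with ((p^2 - w*w) / 4) by lra. field.
Qed.

Lemma Ppoly_factor_two_pos_roots a b c d x1 x2 :
  0 < d -> 0 < x1 -> 0 < x2 -> x1 <> x2 ->
  Ppoly a b c d x1 = 0 -> Ppoly a b c d x2 = 0 ->
  exists r s, r < 0 < s /\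
    forall t, Ppoly a b c d t = (t - x1) * (t - x2) * (t - s) * (t - r).
Proof.
  intros Hd H1 H2 Hne P1 P2.
  destruct (Ppoly_factor_two_roots a b c d x1 x2 P1 P2 Hne) as [p [q F]].
  assert (Hq : q < 0).
  { assert (E0 : Ppoly a b c d 0 = - d) by (unfold Ppoly; ring).
    rewrite F in E0.
    assert (0 < x1 * x2) by nra. nra. }
  destruct (quadratic_factor_neg_const p q Hq) as [r [s [Hrs G]]].
  exists r, s. split; [exact Hrs |].
  intros t. rewrite F, G. ring.
Qed.

Lemma pow2_pos x : x <> 0 -> 0 < x^2.
Proof. intros Hx. rewrite <- Rsqr_pow2. exact (Rsqr_pos_lt x Hx). Qed.

Lemma double_root_sign (f : R -> R) u v r t :
  (forall x, f x = (x - u)^2 * (x - v) * (x - r)) ->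
  r < t -> t <> u -> t <> v -> 0 < f t * (t - v).
Proof.
  intros F Hrt Hu Hv. rewrite F.
  assert (Hu2 : 0 < (t - u)^2) by (apply pow2_pos; lra).
  assert (Hv2 : 0 < (t - v)^2) by (apply pow2_pos; lra).
  replace ((t - u)^2 * (t - v) * (t - r) * (t - v))
    with ((t - u)^2 * (t - v)^2 * (t - r)) by ring.
  apply Rmult_lt_0_compat; [apply Rmult_lt_0_compat |]; lra.
Qed.

Lemma simple_roots_sign (f : R -> R) x1 x2 x3 r t :
  (forall x, f x = (x - x1) * (x - x2) * (x - x3) * (x - r)) ->
  r < t -> t <> x1 -> t <> x2 -> t <> x3 ->
  0 < f t * ((t - x1) * (t - x2) * (t - x3)).
Proof.
  intros F Hrt H1 H2 H3. rewrite F.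
  assert (Hsq : 0 < ((t - x1) * (t - x2) * (t - x3))^2).
  { apply pow2_pos. repeat apply Rmult_integral_contrapositive_currified; lra. }
  replace ((t - x1) * (t - x2) * (t - x3) * (t - r) * ((t - x1) * (t - x2) * (t - x3)))
    with (((t - x1) * (t - x2) * (t - x3))^2 * (t - r)) by ring.
  apply Rmult_lt_0_compat; lra.
Qed.

Lemma exists_between_near_endpoint t1 t2 u eps :
  t1 < t2 -> (u = t1 \/ u = t2) -> 0 < eps ->
  exists x, t1 < x < t2 /\ Rabs (x - u) < eps.
Proof.
  intros H12 Hu Heps. set (m := Rmin (eps / 2) ((t2 - t1) / 2)).
  assert (0 < m) by (apply Rmin_glb_lt; lra).
  assert (m <= eps / 2) by apply Rmin_l.
  assert (m <= (t2 - t1) / 2) by apply Rmin_r.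
  destruct Hu as [-> | ->].
  - exists (t1 + m). split; [lra | rewrite Rabs_right; lra].
  - exists (t2 - m). split; [lra | rewrite Rabs_left; lra].
Qed.

Lemma not_local_min_root_neg_between (f : R -> R) t1 t2 u :
  t1 < t2 -> (u = t1 \/ u = t2) -> f u = 0 ->
  (forall x, t1 < x < t2 -> f x < 0) -> ~ local_min f u.
Proof.
  intros H12 Hu Hfu Hneg [eps [Heps Hmin]].
  destruct (exists_between_near_endpoint t1 t2 u eps H12 Hu Heps) as [x [Hx Hxu]].
  specialize (Hmin x Hxu). specialize (Hneg x Hx). lra.
Qed.

Lemma local_max_opp (f : R -> R) u : local_max f u -> local_min (fun x => - f x) u.
Proof.
  intros [eps [Heps Hmax]]. exists eps. split; [exact Heps |].
  intros s Hs. specialize (Hmax s Hs). lra.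
Qed.

Lemma is_c_m_local_min_root a b c d :
  is_c_m a b d c -> exists u, 0 < u /\ Ppoly a b c d u = 0 /\ local_min (Ppoly a b c d) u.
Proof. intros (_ & _ & _ & _ & (u & Hu & Pu & _ & Hmin) & _). eauto. Qed.

Lemma is_c_M_local_max_root a b c d :
  is_c_M a b d c -> exists u, 0 < u /\ Ppoly a b c d u = 0 /\ local_max (Ppoly a b c d) u.
Proof. intros (_ & _ & _ & _ & (u & Hu & Pu & _ & Hmax) & _). eauto. Qed.

Section Equilibria.

Variables a b c d : R.
Hypothesis hd : 0 < d.

Lemma sign_one_equilibrium tb :
  is_equilibrium a b c d tb -> (forall t, is_equilibrium a b c d t -> t = tb) ->
  forall t, 0 < t -> t <> tb -> (phi a b c d t - t) * (t - tb) < 0.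
Proof.
  intros _ Huniq t Ht Hne. apply phi_sub_mul_lt0; [exact Ht |].
  apply sign_unique_pos_root; auto.
  - unfold Ppoly. reg.
  - unfold Ppoly. lra.
  - apply Ppoly_eventually_pos.
  - intros z Hz Pz. apply Huniq, is_equilibrium_iff_root; assumption.
Qed.

Lemma two_equilibria_double_root t1 t2 :
  t1 < t2 -> (forall t, is_equilibrium a b c d t <-> (t = t1 \/ t = t2)) ->
  exists r, r < 0 /\
    ((forall t, Ppoly a b c d t = (t - t1)^2 * (t - t2) * (t - r)) \/
     (forall t, Ppoly a b c d t = (t - t2)^2 * (t - t1) * (t - r))).
Proof.
  intros H12 Heq.
  destruct (is_equilibrium_root _ _ _ _ _ (proj2 (Heq t1) (or_introl eq_refl))) as [h1 P1].
  destruct (is_equilibrium_root _ _ _ _ _ (proj2 (Heq t2) (or_intror eq_refl))) as [h2 P2].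
  destruct (Ppoly_factor_two_pos_roots a b c d t1 t2 hd h1 h2 ltac:(lra) P1 P2)
    as [r [s [[Hr Hs] F]]].
  assert (Hs12 : s = t1 \/ s = t2).
  { apply Heq, is_equilibrium_iff_root; [exact Hs |]. rewrite F. ring. }
  exists r. split; [exact Hr |].
  destruct Hs12 as [-> | ->]; [left | right]; intros t; rewrite F; ring.
Qed.

Lemma sign_two_equilibria t1 t2 :
  t1 < t2 -> (forall t, is_equilibrium a b c d t <-> (t = t1 \/ t = t2)) ->
  (is_c_M a b d c -> forall t, 0 < t -> t <> t1 -> t <> t2 ->
     (phi a b c d t - t) * (t - t2) < 0) /\
  (is_c_m a b d c -> forall t, 0 < t -> t <> t1 -> t <> t2 ->
     (phi a b c d t - t) * (t - t1) < 0).
Proof.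
  intros H12 Heq.
  assert (Hroot : forall u, 0 < u -> Ppoly a b c d u = 0 -> u = t1 \/ u = t2)
    by (intros u Hu Pu; apply Heq, is_equilibrium_iff_root; assumption).
  assert (h1 : 0 < t1) by exact (proj1 (proj2 (Heq t1) (or_introl eq_refl))).
  destruct (two_equilibria_double_root t1 t2 H12 Heq) as [r [Hr [F | F]]]; split.
  - intros _ t Ht H1 H2. apply phi_sub_mul_lt0; [exact Ht |].
    apply (double_root_sign _ t1 t2 r); auto; lra.
  - intros Hcm. exfalso.
    destruct (is_c_m_local_min_root a b c d Hcm) as [u [Hu [Pu Hmin]]].
    refine (not_local_min_root_neg_between _ t1 t2 u H12 (Hroot u Hu Pu) Pu _ Hmin).
    intros x Hx. pose proof (double_root_sign _ t1 t2 r x F ltac:(lra) ltac:(lra) ltac:(lra)).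
    nra.
  - intros HcM. exfalso.
    destruct (is_c_M_local_max_root a b c d HcM) as [u [Hu [Pu Hmax]]].
    refine (not_local_min_root_neg_between _ t1 t2 u H12 (Hroot u Hu Pu) _ _
      (local_max_opp _ _ Hmax)); [lra |].
    intros x Hx. pose proof (double_root_sign _ t2 t1 r x F ltac:(lra) ltac:(lra) ltac:(lra)).
    nra.
  - intros _ t Ht H1 H2. apply phi_sub_mul_lt0; [exact Ht |].
    apply (double_root_sign _ t2 t1 r); auto; lra.
Qed.

Lemma sign_three_equilibria t1 t2 t3 :
  t1 < t2 -> t2 < t3 ->
  (forall t, is_equilibrium a b c d t <-> (t = t1 \/ t = t2 \/ t = t3)) ->
  forall t, 0 < t -> t <> t1 -> t <> t2 -> t <> t3 ->
    (phi a b c d t - t) * (t - t1) * (t - t2) * (t - t3) < 0.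
Proof.
  intros H12 H23 Heq t Ht H1 H2 H3.
  destruct (is_equilibrium_root _ _ _ _ _ (proj2 (Heq t1) (or_introl eq_refl))) as [h1 P1].
  destruct (is_equilibrium_root _ _ _ _ _
    (proj2 (Heq t2) (or_intror (or_introl eq_refl)))) as [h2 P2].
  destruct (is_equilibrium_root _ _ _ _ _
    (proj2 (Heq t3) (or_intror (or_intror eq_refl)))) as [h3 P3].
  destruct (Ppoly_factor_two_pos_roots a b c d t1 t2 hd h1 h2 ltac:(lra) P1 P2)
    as [r [s [[Hr Hs] F]]].
  assert (Hs3 : s = t3).
  { assert (E : (t3 - s) * ((t3 - t1) * (t3 - t2) * (t3 - r)) = 0)
      by (rewrite <- P3, F; ring).
    assert (0 < (t3 - t1) * (t3 - t2) * (t3 - r))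
      by (repeat apply Rmult_lt_0_compat; lra).
    apply Rmult_integral in E as [E | E]; lra. }
  subst s.
  replace ((phi a b c d t - t) * (t - t1) * (t - t2) * (t - t3))
    with ((phi a b c d t - t) * ((t - t1) * (t - t2) * (t - t3))) by ring.
  apply phi_sub_mul_lt0; [exact Ht |].
  apply (simple_roots_sign _ t1 t2 t3 r); auto; lra.
Qed.

End Equilibria.

Theorem theorem3 (a b c d cminus : R)
  (ha : 0 < a) (hb : 0 < b) (hd : 0 < d)
  (hcminus : is_c_minus a b d cminus) (hc : cminus < c) :
  (forall tb, is_equilibrium a b c d tb ->
     (forall t, is_equilibrium a b c d t -> t = tb) ->
     forall t, 0 < t -> t <> tb -> (phi a b c d t - t) * (t - tb) < 0) /\
  (forall t1 t2, t1 < t2 ->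
     (forall t, is_equilibrium a b c d t <-> (t = t1 \/ t = t2)) ->
     (is_c_M a b d c ->
        forall t, 0 < t -> t <> t1 -> t <> t2 ->
          (phi a b c d t - t) * (t - t2) < 0) /\
     (is_c_m a b d c ->
        forall t, 0 < t -> t <> t1 -> t <> t2 ->
          (phi a b c d t - t) * (t - t1) < 0)) /\
  (forall t1 t2 t3, t1 < t2 -> t2 < t3 ->
     (forall t, is_equilibrium a b c d t <-> (t = t1 \/ t = t2 \/ t = t3)) ->
     forall t, 0 < t -> t <> t1 -> t <> t2 -> t <> t3 ->
       (phi a b c d t - t) * (t - t1) * (t - t2) * (t - t3) < 0).
Proof.
  split; [| split].
  - exact (sign_one_equilibrium a b c d hd).
  - exact (sign_two_equilibria a b c d hd).
  - exact (sign_three_equilibria a b c d hd).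
Qed.
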